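(* Let $P$ be a matrix as in the context, with column index set $\mathcal{F}$. Let $A\subseteq\mathcal{F}$ with $|A|=r+1$, $\det(P_A)\neq0$ and $A\cap\mathcal{F}'=\emptyset$. Then one of the following holds: (i) $|A\cap\mathcal{F}_i|=1$ for all $i=0,\dots,r$, and $|\det(P_A)|=|\mu(j_0,\dots,j_r)|$ for some numbers $1\le j_i\le n_i$; (ii) there exist $0\le i_0,i_1\le r$ with $|A\cap\mathcal{F}_{i_0}|=2$, $|A\cap\mathcal{F}_{i_1}|=0$ and $|A\cap\mathcal{F}_i|=1$ for all other $i$, and $|\det(P_A)|=|\nu(i_0,j_{i_0},j'_{i_0})|\prod_{i\neq i_0,i_1}l_{ij_i}$ for some numbers $1\le j_i\le n_i$ and $1\le j'_{i_0}\le n_{i_0}$.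
   Context: Fix integers $r\ge1$, $n_0,\dots,n_r\ge1$, vectors $l_i\in\mathbb{Z}_{\ge1}^{n_i}$, $d_i\in\mathbb{Z}^{n_i}$ with $\gcd(l_{ij},d_{ij})=1$ and $d_{i1}/l_{i1}>\dots>d_{in_i}/l_{in_i}$. Let $e_1,\dots,e_{r+1}$ be the standard basis of $\mathbb{Z}^{r+1}$, $u=e_{r+1}$, $e_0=-(e_1+\dots+e_r)$, $v_{ij}=l_{ij}e_i+d_{ij}u$. Let $\mathcal{F}_i=\{f_{i1},\dots,f_{in_i}\}$, $\mathcal{F}'$ one of $\emptyset,\{f^+\},\{f^-\},\{f^+,f^-\}$ (types (ee),(pe),(ep),(pp)), $\mathcal{F}=\mathcal{F}_0\cup\dots\cup\mathcal{F}_r\cup\mathcal{F}'$, and $P$ the $(r+1)\times|\mathcal{F}|$ matrix with column $v_{ij}$ at $f_{ij}$, $u$ at $f^+$, $-u$ at $f^-$. For $|A|=r+1$, $P_A$ is the square submatrix of columns indexed by $A$. Define $\mu(j_0,\dots,j_r)=\sum_{i_0=0}^r d_{i_0j_{i_0}}\prod_{i\ne i_0}l_{ij_i}$ and $\nu(i,j,j')=l_{ij}d_{ij'}-l_{ij'}d_{ij}$. *)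

From HB Require Import structures.
From mathcomp Require Import all_boot all_order all_algebra.
Set Implicit Arguments. Unset Strict Implicit. Unset Printing Implicit Defensive.
Import Order.TTheory GRing.Theory Num.Theory.
Local Open Scope ring_scope.

(* Coordinates of Z^{r+1} are indexed by 'I_(r.+1): coordinate k (k < r)
   is the coefficient of e_{k+1}, coordinate r (= ord_max) is that of u.
   Rays f_{ij} are indexed by {i : 'I_(r.+1) & 'I_(n i)} (j is 0-based),
   f^+ is inr true, f^- is inr false. *)

Definition colT (r : nat) (n : 'I_r.+1 -> nat) : finType :=
  ({i : 'I_r.+1 & 'I_(n i)} + bool)%type.

Definition Fset (r : nat) (n : 'I_r.+1 -> nat) (S : {set bool}) : {set colT n} :=
  [set x : colT n | if x is inr b then b \in S else true].

Definition Fprime (r : nat) (n : 'I_r.+1 -> nat) (S : {set bool}) : {set colT n} :=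
  [set x : colT n | if x is inr b then b \in S else false].

Definition Fblock (r : nat) (n : 'I_r.+1 -> nat) (i : 'I_r.+1) : {set colT n} :=
  [set x : colT n | if x is inl p then tag p == i else false].

Definition Pcol (r : nat) (n : 'I_r.+1 -> nat)
  (l d : forall i : 'I_r.+1, 'I_(n i) -> int) (x : colT n) (a : 'I_r.+1) : int :=
  match x with
  | inl p =>
      if a == ord_max then d (tag p) (tagged p)
      else if tag p == ord0 then - l (tag p) (tagged p)
      else if val (tag p) == (val a).+1 then l (tag p) (tagged p) else 0
  | inr b => if a == ord_max then (if b then 1 else -1) else 0
  end.

(* P_A : columns indexed by the elements of A (in the enumeration order of A;
   only |det| is used, so the order is irrelevant) *)
Definition PA (r : nat) (n : 'I_r.+1 -> nat)
  (l d : forall i : 'I_r.+1, 'I_(n i) -> int) (A : {set colT n}) : 'M[int]_(r.+1) :=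
  \matrix_(a < r.+1, k < r.+1) Pcol l d (nth (inr true) (enum A) k) a.

Definition mu (r : nat) (n : 'I_r.+1 -> nat)
  (l d : forall i : 'I_r.+1, 'I_(n i) -> int) (j : forall i : 'I_r.+1, 'I_(n i)) : int :=
  \sum_(i0 < r.+1) d i0 (j i0) * \prod_(i < r.+1 | i != i0) l i (j i).

Definition nu (r : nat) (n : 'I_r.+1 -> nat)
  (l d : forall i : 'I_r.+1, 'I_(n i) -> int) (i : 'I_r.+1) (j j' : 'I_(n i)) : int :=
  l i j * d i j' - l i j' * d i j.

From HB Require Import structures.
From mathcomp Require Import all_boot all_order all_algebra.
From mathcomp Require Import perm ring.
Import Order.TTheory GRing.Theory Num.Theory.
Set Implicit Arguments. Unset Strict Implicit. Unset Printing Implicit Defensive.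
Local Open Scope ring_scope.

(* Each column of P_A is a ray l_k e_(c k) + d_k u of some block c k, where
   e_0 = -(e_1 + ... + e_r).  Expanding det P_A along the u-coordinate gives
   det P_A = sum_k s_k d_k prod_(m <> k) l_m, with s_k the signed determinant of
   the e_(c m), m <> k.  Since any r distinct e_i form a lattice basis, s_k = +-1
   if these c m are distinct and s_k = 0 otherwise; and, as a cofactor vector, s
   is a linear relation among the e_(c k), while the only relations among
   e_0, ..., e_r have constant coefficients.  If det P_A <> 0, some s_k <> 0, so
   the blocks of the other columns are distinct.  Either every block is hit once:
   then all s_k agree and |det P_A| = |mu|.  Or a block i0 is hit by two columns
   k1, k2 and a block i1 is missed: then s vanishes off {k1, k2}, s_k1 = - s_k2,
   and |det P_A| = |nu| prod l. *)

Lemma big_neq_lift (R : Type) (idx : R) (op : SemiGroup.com_law R) n (k : 'I_n.+1) F :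
  \big[op/idx]_(m | m != k) F m = \big[op/idx]_(i < n) F (lift k i).
Proof.
rewrite (reindex_omap (lift k) (unlift k)) /=.
  by apply: eq_bigl => i; rewrite liftK eq_sym neq_lift eqxx.
by move=> m; case: unliftP => [i ->|->]; rewrite ?eqxx.
Qed.

Section RayMatrix.

Variable r : nat.

(* The b-th coordinate of e_i in the basis e_1, ..., e_r: b : 'I_r stands for e_(b+1). *)
Definition ecoord (i : 'I_r.+1) (b : 'I_r) : int :=
  if i == ord0 then -1 else (i == lift ord0 b)%:R.

Definition emx (g : 'I_r -> 'I_r.+1) : 'M[int]_r := \matrix_(m, b) ecoord (g m) b.

Definition ray_mx (c : 'I_r.+1 -> 'I_r.+1) (lv dv : 'I_r.+1 -> int) : 'M[int]_r.+1 :=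
  \matrix_(k, a) if unlift ord_max a is Some b then lv k * ecoord (c k) b else dv k.

Definition esign (c : 'I_r.+1 -> 'I_r.+1) (k : 'I_r.+1) : int :=
  (-1) ^+ (k + r) * \det (emx (fun m => c (lift k m))).

Lemma normr_det_emx (g : 'I_r -> 'I_r.+1) :
  injective g -> (forall m, g m != ord0) -> `|\det (emx g)| = 1.
Proof.
move=> g_inj g_neq0.
pose s m := odflt m (unlift ord0 (g m)).
have gE m : g m = lift ord0 (s m).
  by rewrite /s; case: unliftP (g_neq0 m) => [b -> | ->] //; rewrite eqxx.
have s_inj : injective s by move=> m1 m2 /(congr1 (lift ord0)); rewrite -!gE => /g_inj.
suff -> : emx g = perm_mx (perm s_inj) by rewrite det_perm normr_sign.
apply/matrixP => m b; rewrite !mxE permE /ecoord gE.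
by rewrite eq_sym (negbTE (neq_lift _ _)) (inj_eq lift_inj).
Qed.

Lemma det_ray_mx c lv dv :
  \det (ray_mx c lv dv) = \sum_k esign c k * (dv k * \prod_(m | m != k) lv m).
Proof.
rewrite (expand_det_col _ ord_max); apply: eq_bigr => k _; rewrite /cofactor.
have -> : row' k (col' ord_max (ray_mx c lv dv)) =
          diag_mx (\row_m lv (lift k m)) *m emx (fun m => c (lift k m)) :> 'M_r.
  by apply/matrixP => m b; rewrite mul_diag_mx !mxE liftK.
rewrite det_mulmx det_diag /esign !mxE unlift_none big_neq_lift.
by under eq_bigr do rewrite mxE; ring.
Qed.

Lemma sum_esign_ecoord c b : \sum_k esign c k * ecoord (c k) b = 0.
Proof.
have := det_ray_mx c (fun _ => 1) (fun k => ecoord (c k) b).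
under eq_bigr do rewrite big1_eq mulr1.
move <-; rewrite -det_tr (determinant_alternate (neq_lift ord_max b)) // => k.
by rewrite !mxE unlift_none liftK mul1r.
Qed.

Lemma ecoord_sum_eq0_const (t : 'I_r.+1 -> int) :
  (forall b, \sum_i t i * ecoord i b = 0) -> forall i, t i = t ord0.
Proof.
move=> t_rel i; case: (unliftP ord0 i) => [b ->|->] //.
move: (t_rel b); rewrite big_ord_recl (bigD1 b) //= big1 => [|a /negbTE ab].
  rewrite /ecoord !eqxx eq_sym (negbTE (neq_lift _ _)) mulrN1 mulr1 addr0.
  by move/eqP; rewrite addrC subr_eq0 => /eqP.
by rewrite /ecoord [lift _ _ == _]eq_sym (negbTE (neq_lift _ _)) (inj_eq lift_inj) ab mulr0.
Qed.

Lemma esign_eq0 c k k1 k2 :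
  k1 != k2 -> c k1 = c k2 -> k != k1 -> k != k2 -> esign c k = 0.
Proof.
case: (unliftP k k1) => [a1 -> | ->]; last by rewrite eqxx.
case: (unliftP k k2) => [a2 -> | ->]; last by rewrite eqxx.
rewrite (inj_eq lift_inj) => a12 ca _ _.
rewrite /esign (determinant_alternate a12) ?mulr0 // => b.
by rewrite !mxE ca.
Qed.

Lemma esign_eq c c' k : (forall m, m != k -> c m = c' m) -> esign c k = esign c' k.
Proof.
move=> cc'; rewrite /esign; congr (_ * \det _); apply/matrixP => m b.
by rewrite !mxE cc' // eq_sym neq_lift.
Qed.

Section Bijective.

Variables (c : 'I_r.+1 -> 'I_r.+1) (c_inj : injective c).

Lemma esign_const k : esign c k = esign c (invF c_inj ord0).
Proof.
pose t i := esign c (invF c_inj i).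
have t_rel b : \sum_i t i * ecoord i b = 0.
  by rewrite (reindex_inj c_inj); under eq_bigr do rewrite /t invF_f; apply: sum_esign_ecoord.
by have := ecoord_sum_eq0_const t_rel (c k); rewrite /t invF_f.
Qed.

Lemma normr_esign k : `|esign c k| = 1.
Proof.
rewrite esign_const /esign normrM normr_sign mul1r.
set k0 := invF c_inj ord0; have ck0 : c k0 = ord0 := f_invF c_inj ord0.
apply: normr_det_emx => [m1 m2 /c_inj /lift_inj // | m].
by rewrite -ck0 (inj_eq c_inj) eq_sym neq_lift.
Qed.

Lemma det_ray_mx_bij lv dv :
  `|\det (ray_mx c lv dv)| = `|\sum_k dv k * \prod_(m | m != k) lv m|.
Proof.
rewrite det_ray_mx; under eq_bigr do rewrite esign_const.
by rewrite -mulr_sumr normrM normr_esign mul1r.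
Qed.

End Bijective.

Section Repointed.

Variables (c c' : 'I_r.+1 -> 'I_r.+1) (k1 k2 : 'I_r.+1).
Hypotheses (c'_inj : injective c') (k12 : k1 != k2) (ck2 : c k2 = c' k1).
Hypothesis cc' : forall m, m != k2 -> c m = c' m.

Let ck12 : c k1 = c k2. Proof. by rewrite ck2 cc'. Qed.

Lemma esign_repoint_eq0 k : k != k1 -> k != k2 -> esign c k = 0.
Proof. exact: esign_eq0 k12 ck12. Qed.

Lemma esign_repoint_opp : esign c k1 = - esign c k2.
Proof.
(* [t] sums [esign c] over the fibres of [c]; it vanishes at the missed block [c' k2]. *)
pose t i := if i == c k1 then esign c k1 + esign c k2 else 0.
have t_rel b : \sum_i t i * ecoord i b = 0.
  rewrite -[RHS](sum_esign_ecoord c b) (bigD1 (c k1)) //= big1 => [|i /negbTE ti]; last first.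
    by rewrite /t ti mul0r.
  rewrite [RHS](bigD1 k1) //= (bigD1 k2) 1?eq_sym //= big1 => [|k /andP [k1k k2k]].
    by rewrite /t eqxx -ck12 !addr0 mulrDl.
  by rewrite esign_repoint_eq0 ?mul0r.
have := ecoord_sum_eq0_const t_rel (c' k2); rewrite -(ecoord_sum_eq0_const t_rel (c k1)).
rewrite /t eqxx cc' // (inj_eq c'_inj) eq_sym (negbTE k12).
by move/esym/eqP; rewrite addr_eq0 => /eqP.
Qed.

Lemma det_ray_mx_repoint lv dv :
  `|\det (ray_mx c lv dv)| =
    `|lv k1 * dv k2 - lv k2 * dv k1| * `|\prod_(m | (m != k1) && (m != k2)) lv m|.
Proof.
rewrite det_ray_mx (bigD1 k1) //= [\sum_(i | i != k1) _](bigD1 k2) 1?eq_sym //=.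
rewrite [X in _ + (_ + X)]big1 => [|k /andP [k1k k2k]]; last first.
  by rewrite esign_repoint_eq0 ?mul0r.
rewrite [\prod_(m | m != k1) _](bigD1 k2) 1?eq_sym //=.
rewrite [\prod_(m | m != k2) _](bigD1 k1) //=.
under [X in _ * (lv k1 * X)]eq_bigl do rewrite andbC.
set P := \prod_(m | _) _; rewrite addr0 esign_repoint_opp -normrM.
have -> : - esign c k2 * (dv k1 * (lv k2 * P)) + esign c k2 * (dv k2 * (lv k1 * P)) =
          esign c k2 * ((lv k1 * dv k2 - lv k2 * dv k1) * P) by ring.
by rewrite (esign_eq cc') [LHS]normrM (normr_esign c'_inj) mul1r normrM.
Qed.

End Repointed.

Lemma injective_lift_cases (c : 'I_r.+1 -> 'I_r.+1) k :
  injective (fun m => c (lift k m)) ->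
  injective c \/
  exists k1 (c' : 'I_r.+1 -> 'I_r.+1),
    [/\ injective c', k1 != k, c k = c' k1 & forall m, m != k -> c m = c' m].
Proof.
move=> ck_inj; set f := fun m => c (lift k m).
have /subsetPn [i1 _ i1f] : ~~ ([set: 'I_r.+1] \subset codom f).
  by apply/negP => /subset_leq_card; rewrite cardsT card_codom // !card_ord ltnn.
pose c' m := if m == k then i1 else c m.
have c'_inj : injective c'.
  move=> m1 m2; rewrite /c'.
  case: (unliftP k m1) => [a1 ->|->]; case: (unliftP k m2) => [a2 ->|->];
    rewrite ?eqxx ?[lift _ _ == _]eq_sym ?(negbTE (neq_lift _ _)) //.
  - by move/ck_inj ->.
  - by move=> e; case/negP: i1f; rewrite -e codom_f.
  - by move=> e; case/negP: i1f; rewrite e codom_f.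
have c'E m : m != k -> c m = c' m by rewrite /c' => /negbTE ->.
case: (eqVneq (c k) i1) => [cki1 | ncki1].
  by left; apply: (eq_inj c'_inj) => m; rewrite /c'; case: eqP => [->|].
right; exists (invF c'_inj (c k)), c'; split=> //; last by rewrite f_invF.
apply: contra_neq ncki1 => e; by rewrite -[c k](f_invF c'_inj) e /c' eqxx.
Qed.

Lemma det_ray_mx_cases c lv dv : \det (ray_mx c lv dv) != 0 ->
  (injective c /\ `|\det (ray_mx c lv dv)| = `|\sum_k dv k * \prod_(m | m != k) lv m|) \/
  exists k1 k2 (c' : 'I_r.+1 -> 'I_r.+1),
    [/\ injective c', k1 != k2, c k2 = c' k1, forall m, m != k2 -> c m = c' m &
      `|\det (ray_mx c lv dv)| =
        `|lv k1 * dv k2 - lv k2 * dv k1| * `|\prod_(m | (m != k1) && (m != k2)) lv m|].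
Proof.
move=> det_neq0.
have /existsP [k2 esign_neq0] : [exists k, esign c k != 0].
  apply: contraR det_neq0 => /existsPn esign0; rewrite det_ray_mx big1 // => k _.
  by rewrite (eqP (negPn (esign0 k))) mul0r.
have ck2_inj : injective (fun m => c (lift k2 m)).
  apply/injectiveP; apply: contraR esign_neq0 => /injectivePn [a [b ab cab]].
  by rewrite (esign_eq0 (k1 := lift k2 a) (k2 := lift k2 b)) ?(inj_eq lift_inj) ?neq_lift.
case: (injective_lift_cases ck2_inj) => [c_inj | [k1 [c' [c'_inj k12 ck2 cc']]]].
  by left; split; last exact: det_ray_mx_bij.
by right; exists k1, k2, c'; split; last exact: (det_ray_mx_repoint c'_inj k12 ck2 cc').
Qed.

End RayMatrix.

Section Fibers.

Variables (T : finType) (c' : T -> T) (c'_inj : injective c').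

Lemma card_fiber_inj i : #|[set k | c' k == i]| = 1%N.
Proof.
rewrite -(cards1 (invF c'_inj i)); apply: eq_card => k; rewrite !inE.
by apply/eqP/eqP => [<- | ->]; rewrite ?invF_f ?f_invF.
Qed.

Lemma card_fiber_repoint (c : T -> T) k1 k2 :
  k1 != k2 -> c k2 = c' k1 -> (forall m, m != k2 -> c m = c' m) ->
  [/\ #|[set k | c k == c' k1]| = 2%N, #|[set k | c k == c' k2]| = 0%N
    & forall i, i != c' k1 -> i != c' k2 -> #|[set k | c k == i]| = 1%N].
Proof.
move=> k12 ck2 cc'.
have cE m : c m = if m == k2 then c' k1 else c' m.
  by case: eqP => [-> // | /eqP /cc'].
split.
- have := cards2 k1 k2; rewrite k12 => <-; apply: eq_card => m; rewrite !inE cE.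
  by case: (eqVneq m k2) => [-> | _]; rewrite ?eqxx ?orbT ?orbF ?(inj_eq c'_inj).
- apply/eqP; rewrite cards_eq0; apply/eqP/setP => m; rewrite !inE cE.
  by case: (eqVneq m k2) => [_ | mk2]; rewrite (inj_eq c'_inj); apply/negbTE.
- move=> i ik1 ik2; rewrite -(card_fiber_inj i); apply: eq_card => m; rewrite !inE cE.
  case: (eqVneq m k2) => [-> | //]; by rewrite eq_sym (negbTE ik1) eq_sym (negbTE ik2).
Qed.

End Fibers.

Lemma tagged_section (K : Type) (I : eqType) (T_ : I -> Type) (j0 : forall i, T_ i)
    (x : K -> {i : I & T_ i}) (c : K -> I) (ci : I -> K) :
  cancel c ci ->
  exists j : forall i, T_ i, forall k, tag (x k) = c k -> x k = Tagged T_ (j (c k)).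
Proof.
move=> cK; exists (fun i => tagged_as (Tagged T_ (j0 i)) (x (ci i))) => k; rewrite cK.
by case: (x k) => i t /= <-; rewrite tagged_asE.
Qed.

Section Rays.

Variables (r : nat) (n : 'I_r.+1 -> nat).

Lemma Pcol_inl (l d : forall i : 'I_r.+1, 'I_(n i) -> int) p a :
  Pcol l d (inl p) a =
  if unlift ord_max a is Some b then l (tag p) (tagged p) * ecoord (tag p) b
  else d (tag p) (tagged p).
Proof.
rewrite /Pcol /ecoord; case: unliftP => [b -> | ->]; last by rewrite eqxx.
rewrite eq_sym (negbTE (neq_lift _ _)); case: ifP => _; first by rewrite mulrN1.
rewrite -val_eqE /= /bump leqNgt ltn_ord /=.
by case: eqP; rewrite ?mulr1 ?mulr0.
Qed.

Lemma PA_ray_mx (l d : forall i : 'I_r.+1, 'I_(n i) -> int) (A : {set colT n})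
    (x : 'I_r.+1 -> {i : 'I_r.+1 & 'I_(n i)}) :
  (forall k : 'I_r.+1, nth (inr true) (enum A) k = inl (x k)) ->
  PA l d A = (ray_mx (fun k => tag (x k)) (fun k => l _ (tagged (x k)))
                     (fun k => d _ (tagged (x k))))^T.
Proof. by move=> xE; apply/matrixP => a k; rewrite !mxE xE Pcol_inl. Qed.

Lemma rays_of_enum (S : {set bool}) (A : {set colT n}) :
  A \subset Fset n S -> A :&: Fprime n S = set0 -> #|A| = r.+1 ->
  exists x : 'I_r.+1 -> {i : 'I_r.+1 & 'I_(n i)},
    forall k : 'I_r.+1, nth (inr true) (enum A) k = inl (x k).
Proof.
move=> AF AF' cardA.
suff /fin_all_exists : forall k : 'I_r.+1, exists p, nth (inr true) (enum A) k = inl p by [].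
move=> k; have : nth (inr true) (enum A) k \in A by rewrite -mem_enum mem_nth // -cardE cardA.
case: nth => [p _ | b bA]; first by exists p.
have : inr b \in A :&: Fprime n S.
  by rewrite !inE bA; move/subsetP: AF => /(_ _ bA); rewrite inE.
by rewrite AF' inE.
Qed.

Lemma card_block_rays (A : {set colT n}) (x : 'I_r.+1 -> {i : 'I_r.+1 & 'I_(n i)}) :
  #|A| = r.+1 -> (forall k : 'I_r.+1, nth (inr true) (enum A) k = inl (x k)) ->
  forall i, #|A :&: Fblock n i| = #|[set k | tag (x k) == i]|.
Proof.
move=> cardA xE i; have size_enum : size (enum A) = r.+1 by rewrite -cardE.
have x_inj : injective (fun k => inl (x k) : colT n).
  move=> k1 k2; rewrite -!xE => /eqP; rewrite nth_uniq ?enum_uniq ?size_enum //.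
  by move/eqP/val_inj.
rewrite -(card_imset _ x_inj); apply: eq_card => y; rewrite !inE.
apply/andP/imsetP => [[yA yi] | [k ki ->]].
  have /(nthP (inr true)) [k' k'lt yE] : y \in enum A by rewrite mem_enum.
  rewrite size_enum in k'lt; have yx : y = inl (x (Ordinal k'lt)) by rewrite -yE -xE.
  by exists (Ordinal k'lt); rewrite // inE; move: yi; rewrite yx.
rewrite -xE -mem_enum mem_nth ?size_enum //; split=> //.
by move: ki; rewrite inE.
Qed.

Lemma mu_reindex (l d : forall i : 'I_r.+1, 'I_(n i) -> int) (c : 'I_r.+1 -> 'I_r.+1)
    (j : forall i, 'I_(n i)) (lv dv : 'I_r.+1 -> int) :
  injective c -> (forall k, lv k = l (c k) (j (c k))) -> (forall k, dv k = d (c k) (j (c k))) ->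
  \sum_k dv k * \prod_(m | m != k) lv m = mu l d j.
Proof.
move=> c_inj lvE dvE; rewrite /mu [RHS](reindex_inj c_inj); apply: eq_bigr => k _.
rewrite dvE [\prod_(i | i != c k) _](reindex_inj c_inj) /=; congr (_ * _).
by apply: eq_big => [m | m _]; rewrite ?(inj_eq c_inj) ?lvE.
Qed.

Lemma prod_repoint_reindex (l : forall i : 'I_r.+1, 'I_(n i) -> int) (c' : 'I_r.+1 -> 'I_r.+1)
    (j : forall i, 'I_(n i)) (lv : 'I_r.+1 -> int) k1 k2 :
  injective c' -> (forall m, m != k2 -> lv m = l (c' m) (j (c' m))) ->
  \prod_(m | (m != k1) && (m != k2)) lv m = \prod_(i | (i != c' k1) && (i != c' k2)) l i (j i).
Proof.
move=> c'_inj lvE; rewrite [RHS](reindex_inj c'_inj) /=.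
by apply: eq_big => [m | m /andP [_ mk2]]; rewrite ?(inj_eq c'_inj) ?lvE.
Qed.

End Rays.

Theorem lemma4p6 (r : nat) (n : 'I_r.+1 -> nat)
  (l d : forall i : 'I_r.+1, 'I_(n i) -> int) (S : {set bool})
  (hr : (1 <= r)%N)
  (hn : forall i, (1 <= n i)%N)
  (hl : forall i j, 1 <= l i j)
  (hcop : forall i j, coprimez (l i j) (d i j))
  (hdec : forall i (j j' : 'I_(n i)), (j < j')%N ->
     (d i j')%:~R / (l i j')%:~R < (d i j)%:~R / (l i j)%:~R :> rat)
  (A : {set colT n})
  (hAF : A \subset Fset n S)
  (hcard : #|A| = r.+1)
  (hdet : \det (PA l d A) != 0)
  (hAF' : A :&: Fprime n S = set0) :
  ((forall i, #|A :&: Fblock n i| = 1%N) /\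
     exists j : forall i : 'I_r.+1, 'I_(n i),
       `|\det (PA l d A)| = `|mu l d j|)
  \/
  (exists i0 i1 : 'I_r.+1,
     [/\ #|A :&: Fblock n i0| = 2%N, #|A :&: Fblock n i1| = 0%N,
         (forall i, i != i0 -> i != i1 -> #|A :&: Fblock n i| = 1%N) &
         exists (j : forall i : 'I_r.+1, 'I_(n i)) (j' : 'I_(n i0)),
           `|\det (PA l d A)| =
             `|nu l d (j i0) j'| * \prod_(i < r.+1 | (i != i0) && (i != i1)) l i (j i)]).
Proof.
have [x xE] := rays_of_enum hAF hAF' hcard.
have cardE := card_block_rays hcard xE.
rewrite (PA_ray_mx l d xE) det_tr in hdet *.
have j0 i : 'I_(n i) := Ordinal (hn i).
case: (det_ray_mx_cases hdet) => [[c_inj ->] | [k1 [k2 [c' [c'_inj k12 ck2 cc' ->]]]]].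
  left; split=> [i | ]; first by rewrite cardE card_fiber_inj.
  have [j jE] := tagged_section j0 x (invF_f c_inj).
  by exists j; congr `|_|; apply: mu_reindex c_inj _ _ => k; rewrite jE.
right; have [N2 N0 N1] := card_fiber_repoint c'_inj k12 ck2 cc'.
exists (c' k1), (c' k2); split; rewrite ?cardE //; first by move=> i ik1 ik2; rewrite cardE N1.
have [j jE] := tagged_section j0 x (invF_f c'_inj).
have [j' j'E] : {t : 'I_(n (c' k1)) | x k2 = Tagged _ t}.
  by move: ck2 => /=; case: (x k2) => i t /= <-; exists t.
have lE m : m != k2 -> l (tag (x m)) (tagged (x m)) = l (c' m) (j (c' m)).
  by move=> mk2; rewrite (jE m (cc' m mk2)).
have := prod_repoint_reindex (l := l) (j := j) k1 c'_inj lE; rewrite /= => ->; exists j, j'.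
rewrite [`|\prod_(i | _) _|]ger0_norm; last first.
  by apply: prodr_ge0 => i _; apply: le_trans ler01 (hl _ _).
by rewrite /nu (jE k1 (cc' k1 k12)) j'E.
Qed.
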